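(* Consider unconstrained liquidity ($K=m$), $n$ recommenders, $m$ borrowers, threshold $c\in[0,1]$, a prior $\mathcal D$ with full support, and the truncated Winkler mechanism with the weighted linear aggregator $B_q(\hat p_q)=\sum_{i\in N}w_i\hat p_{iq}$, where $w_i>0$ and $\sum_i w_i=1$. If $\max_i w_i<1-c$, then the mechanism is ex post individually rational and strictly interim incentive compatible. Moreover, the condition $\max_i w_i<1-c$ can hold only if $c<(n-1)/n$.
   Context: Setting: borrowers $M=\{1,\dots,m\}$, recommenders $N=\{1,\dots,n\}$; beliefs $p_{iq}\in[0,1]$, reports $\hat p_{iq}\in[0,1]$ made simultaneously; $p_{-i}$, $p_{-i,q}=(p_{jq})_{j\ne i}$ denote beliefs of others. Beliefs $p\sim\mathcal D$ on $[0,1]^{n\times m}$ (common knowledge), $\mathcal D_{-i}$ the marginal of $p_{-i}$; full support means every nonempty relatively open subset of $[0,1]^{n\times m}$ has positive $\mathcal D$-probability. Outcomes $o_q\in\{0,1\}$. A mechanism makes loan decisions $x_q(\hat p)\in\{0,1\}$, charges immediate payment $t_i(\hat p)$ made by $i$, pays $s_{iq}(\hat p_{iq},o_q)$ to $i$ for each loaned $q$; $U_i(p_i,\hat p_i,\hat p_{-i})=\sum_{q:x_q(\hat p)=1}(p_{iq}s_{iq}(\hat p_{iq},1)+(1-p_{iq})s_{iq}(\hat p_{iq},0))-t_i(\hat p)$. Truncated Winkler mechanism: $x_q(\hat p)=1$ iff $B_q(\hat p_q)>c$; no immediate payment; for loaned $q$, $s^W_{iq}(\hat p_{iq},1)=\frac{\ln\hat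 p_{iq}-\ln c_{iq}}{-\ln c_{iq}}$, $s^W_{iq}(\hat p_{iq},0)=\frac{\ln(1-\hat p_{iq})-\ln(1-c_{iq})}{-\ln c_{iq}}$ (conventions $\ln0=-\infty$, $0\cdot(-\infty)=0$), where $c_{iq}=\inf\{p'\in[0,1]:B_q(p',\hat p_{-i,q})>c\}$, which for the linear aggregator equals $\min\big(1,\max\big(0,\frac1{w_i}(c-\sum_{j\ne i}w_j\hat p_{jq})\big)\big)$. Ex post individually rational: $U_i(p_i,p_i,\hat p_{-i})\ge 0$ for all $i,p_i,\hat p_{-i}$. Strictly interim incentive compatible: for all $i$, all $p_i$, all $\hat p_i\ne p_i$, $\mathbb E_{p_{-i}\sim\mathcal D_{-i}}[U_i(p_i,p_i,p_{-i})]>\mathbb E_{p_{-i}\sim\mathcal D_{-i}}[U_i(p_i,\hat p_i,p_{-i})]$. *)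

From HB Require Import structures.
From mathcomp Require Import all_boot all_order all_algebra.
From mathcomp Require Import all_classical all_reals all_analysis.

Set Implicit Arguments.
Unset Strict Implicit.
Unset Printing Implicit Defensive.

Import Order.TTheory GRing.Theory Num.Theory.
Import numFieldNormedType.Exports.

Local Open Scope classical_set_scope.
Local Open Scope ring_scope.

Section LoanDefs.
Variable R : realType.

(* Belief / report profiles: an n x m matrix, entry (i,q) = p_{iq}.
   Recommenders are 'I_n, borrowers are 'I_m. *)

Definition BeliefSpace (n m : nat) :=
  g_sigma_algebraType (@open 'M[R]_(n, m)).

Definition unitbox (n m : nat) : set 'M[R]_(n, m) :=
  [set P | forall i q, 0 <= P i q <= 1].
Arguments unitbox : clear implicits.


Definition unitrow (m : nat) : set 'rV[R]_m :=
  [set r | forall q, 0 <= r ord0 q <= 1].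

Definition full_support (n m : nat) (D : probability (BeliefSpace n m) R) :=
  forall U : set 'M[R]_(n, m), open U ->
    (U `&` unitbox n m) !=set0 -> (0 < D (U `&` unitbox n m))%E.

Definition with_row (n m : nat) (i : 'I_n) (r : 'rV[R]_m) (P : 'M[R]_(n, m))
  : 'M[R]_(n, m) := \matrix_(j, q) if j == i then r ord0 q else P j q.

Definition agg (n m : nat) (w : 'I_n -> R) (P : 'M[R]_(n, m)) (q : 'I_m) : R :=
  \sum_(j < n) w j * P j q.

(* loan decision x_q(p) = 1 iff B_q(p_q) > c  (unconstrained liquidity K = m) *)
Definition loan (n m : nat) (c : R) (w : 'I_n -> R) (P : 'M[R]_(n, m))
  (q : 'I_m) : bool := c < agg w P q.

(* critical report c_iq = inf {p' in [0,1] : B_q(p', p_{-i,q}) > c},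
   which for the linear aggregator equals
   min(1, max(0, (c - sum_{j<>i} w_j p_jq) / w_i)) *)
Definition crit (n m : nat) (c : R) (w : 'I_n -> R) (P : 'M[R]_(n, m))
  (i : 'I_n) (q : 'I_m) : R :=
  Num.min 1 (Num.max 0 ((c - \sum_(j < n | j != i) w j * P j q) / w i)).

Definition eln (x : R) : \bar R := if x <= 0 then -oo%E else (ln x)%:E.

Definition winkler1 (ph ci : R) : \bar R :=
  if (0 < ci) && (ci < 1) then
    ((eln ph - (ln ci)%:E) * ((- ln ci)^-1)%:E)%E
  else 0%E.

Definition winkler0 (ph ci : R) : \bar R :=
  if (0 < ci) && (ci < 1) then
    ((eln (1 - ph) - (ln (1 - ci))%:E) * ((- ln ci)^-1)%:E)%E
  else 0%E.

(* U_i(p_i, ph_i, ph_{-i}) for the truncated Winkler mechanism (no immediate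
   payment, t_i = 0).  P provides the reports of the others (its row i is
   ignored). *)
Definition utility (n m : nat) (c : R) (w : 'I_n -> R) (i : 'I_n)
  (pi ph : 'rV[R]_m) (P : 'M[R]_(n, m)) : \bar R :=
  let Ph := with_row i ph P in
  (\sum_(q < m | loan c w Ph q)
     ((pi ord0 q)%:E * winkler1 (ph ord0 q) (crit c w Ph i q)
      + (1 - pi ord0 q)%:E * winkler0 (ph ord0 q) (crit c w Ph i q)))%E.

Definition interim_utility (n m : nat) (D : probability (BeliefSpace n m) R)
  (c : R) (w : 'I_n -> R) (i : 'I_n) (pi ph : 'rV[R]_m) : \bar R :=
  (\int[D]_(P in unitbox n m) utility c w i pi ph P)%E.

Definition ex_post_IR (n m : nat) (c : R) (w : 'I_n -> R) :=
  forall (i : 'I_n) (pi : 'rV[R]_m) (P : 'M[R]_(n, m)),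
    unitrow pi -> unitbox n m P -> (0 <= utility c w i pi pi P)%E.

Definition strictly_interim_IC (n m : nat) (D : probability (BeliefSpace n m) R)
  (c : R) (w : 'I_n -> R) :=
  forall (i : 'I_n) (pi ph : 'rV[R]_m),
    unitrow pi -> unitrow ph -> ph != pi ->
    (interim_utility D c w i pi ph < interim_utility D c w i pi pi)%E.

End LoanDefs.
Arguments unitbox R n m : clear implicits.
Arguments ex_post_IR {R} n m c w.
Arguments strictly_interim_IC {R n m} D c w.
Arguments full_support {R n m} D.

From HB Require Import structures.
From mathcomp Require Import all_boot all_order all_algebra.
From mathcomp Require Import all_classical all_reals all_analysis.
From mathcomp Require Import measurable_realfun ring lra.

Set Implicit Arguments.
Unset Strict Implicit.
Unset Printing Implicit Defensive.

Import Order.TTheory GRing.Theory Num.Theory.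
Import numFieldNormedType.Exports.

Local Open Scope classical_set_scope.
Local Open Scope ring_scope.

(* Fix a recommender i and a borrower q, and let s be the weighted sum of
   the other reports on q.  The loan is made iff i's report b exceeds the
   critical report x = (c - s) / w_i, and the truncated score only depends
   on b and x, so under belief a the contribution of q to i's expected ex
   post utility is a function [payoff a b x] (section Payoff).  Gibbs'
   inequality and the bound ln y < y - 1 (section LogScore) show that the
   truthful payoff lies in [0, 1], that every report is weakly worse, and
   strictly worse when 0 < x < 1, x <> a and x lies below a or b.

   Summing over borrowers (utility_payoff), ex post IR is immediate and any
   misreport is pointwise weakly worse.  If the report differs from the
   belief on q, it is strictly worse on the "pivotal" profiles that put x in
   a small interval (0, t); these form a relatively open set which meets the
   box because w_i < 1 - c, hence has positive probability by full support.
   A strict comparison lemma for integrals (section StrictIntegral) then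
   gives strict interim IC.  The bound c < (n - 1) / n is obtained by
   summing w_i < 1 - c over the recommenders. *)

Section LogScore.
Variable R : realType.
Implicit Types a b x y : R.

Lemma ln_lt_subr1 y : 0 < y -> y != 1 -> ln y < y - 1.
Proof.
move=> y0 y1; have : ln y != 0.
  by apply: contra y1 => /eqP ly0; rewrite -(lnK (x := y)) ?posrE // ly0 expR0.
by move=> /expR_gt1Dx; rewrite lnK ?posrE //; lra.
Qed.

Lemma lnN_gt0 x : 0 < x < 1 -> 0 < - ln x.
Proof. by move=> hx; rewrite oppr_gt0 ln_lt0. Qed.

(* Expected gain, under belief a, of the logarithmic score of report b over
   that of report x. *)
Definition lscore a b x : R :=
  a * (ln b - ln x) + (1 - a) * (ln (1 - b) - ln (1 - x)).

(* Quadratic upper bound on the log-score gain (from ln y < y - 1); it is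
   the common source of Gibbs' inequality and of the loss from
   over-reporting. *)
Lemma lscore_lt_bound a b x : 0 < x < 1 -> 0 <= a <= 1 -> 0 < b < 1 -> b != x ->
  lscore a b x < (b - x) * (a - x) / (x * (1 - x)).
Proof.
move=> /andP[x0 x1] /andP[a0 a1] /andP[b0 b1] bx.
have lt1 : ln b - ln x < b / x - 1.
  rewrite -ln_div ?posrE //; apply: ln_lt_subr1; first exact: divr_gt0.
  by apply: contra bx => /eqP/divr1_eq ->.
have lt2 : ln (1 - b) - ln (1 - x) < (1 - b) / (1 - x) - 1.
  rewrite -ln_div ?posrE ?subr_gt0 //; apply: ln_lt_subr1.
    by apply: divr_gt0; lra.
  by apply: contra bx => /eqP/divr1_eq e; apply/eqP; lra.
have -> : (b - x) * (a - x) / (x * (1 - x)) =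
    a * (b / x - 1) + (1 - a) * ((1 - b) / (1 - x) - 1).
  field; apply/andP; split; rewrite ?subr_eq0; apply/negP => /eqP; lra.
rewrite /lscore; have [->|a_gt0] := eqVneq a 0.
  by rewrite !mul0r !add0r subr0 !mul1r.
have {}a_gt0 : 0 < a by rewrite lt_neqAle eq_sym a_gt0.
apply: ltr_leD; first by rewrite ltr_pM2l.
by apply: ler_wpM2l; [lra | exact: ltW].
Qed.

Lemma lscore_gibbs a b : 0 < a < 1 -> 0 < b < 1 -> b != a -> lscore a b a < 0.
Proof.
move=> ha hb ba; have := @lscore_lt_bound a b a ha _ hb ba.
by rewrite subrr mulr0 mul0r; apply; apply/andP; split; lra.
Qed.

(* Winkler's normalisation of the log score relative to the critical report
   x: expected score of report b under belief a, when the loan is made. *)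
Definition wscore a b x : R := lscore a b x / (- ln x).

Lemma wscore_lt_truthful a b x : 0 < x < 1 -> 0 < a < 1 -> 0 < b < 1 ->
  b != a -> wscore a b x < wscore a a x.
Proof.
move=> hx ha hb ba; have := lscore_gibbs ha hb ba.
rewrite /wscore ltr_pM2r ?invr_gt0 ?lnN_gt0 // /lscore; lra.
Qed.

Lemma wscore_truthful_gt0 a x : 0 < x < 1 -> 0 < a < 1 -> x != a ->
  0 < wscore a a x.
Proof.
move=> hx ha xa; have := lscore_gibbs ha hx xa.
rewrite /wscore /lscore => gibbs; apply: divr_gt0; [lra | exact: lnN_gt0].
Qed.

Lemma wscore_truthful_le1 a x : 0 < x -> x < a -> a < 1 -> wscore a a x <= 1.
Proof.
move=> x0 xa a1; have hx : 0 < x < 1 by apply/andP; split; lra.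
have Lx := lnN_gt0 hx.
have la : ln a <= 0 by apply: ln_le0; lra.
have l1 : ln (1 - a) <= ln (1 - x) by rewrite ler_ln ?posrE; lra.
rewrite /wscore /lscore ler_pdivrMr ?lnN_gt0 // mul1r.
have : 0 <= a by lra.
have : 0 <= 1 - a by lra.
nra.
Qed.

Lemma wscore_certain_lt1 b x : 0 < x < 1 -> 0 < b < 1 -> wscore 1 b x < 1.
Proof.
move=> hx hb; have lb : ln b < 0 by exact: ln_lt0.
rewrite /wscore /lscore ltr_pdivrMr ?lnN_gt0 //; lra.
Qed.

Lemma wscore_below_lt0 a b x : 0 < x < 1 -> 0 <= a <= x -> x < b < 1 ->
  wscore a b x < 0.
Proof.
move=> hx /andP[a0 ax] /andP[xb b1]; move: (hx) => /andP[x0 x1].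
have := @lscore_lt_bound a b x hx.
have neg : (b - x) * (a - x) / (x * (1 - x)) <= 0.
  rewrite pmulr_lle0 ?invr_gt0 ?mulr_gt0 //; [nra | lra].
rewrite /wscore pmulr_llt0 ?invr_gt0 ?lnN_gt0 // => bound.
by rewrite (lt_le_trans _ neg) // bound ?gt_eqF //; apply/andP; split; lra.
Qed.

End LogScore.

Section Payoff.
Variable R : realType.
Implicit Types a b x : R.
Local Open Scope ereal_scope.

(* Expected normalised Winkler score of report b under belief a when the
   loan is made and the critical report is x; a report of 1 scores 1 on
   repayment and -oo on default. *)
Definition loan_payoff a b x : \bar R :=
  if (b < 1)%R then (wscore a b x)%:E else if a == 1%R then 1 else -oo.

(* Expected contribution of one borrower to a recommender's utility, as a
   function of belief a, report b and critical report x: the truncated score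
   vanishes unless 0 < x < 1, and the loan is made iff x < b. *)
Definition payoff a b x : \bar R :=
  if [&& (0 < x)%R, (x < 1)%R & (x < b)%R] then loan_payoff a b x else 0.

Lemma loan_payoff_truthful a x : (0 < x < a)%R -> (a <= 1)%R ->
  0 < loan_payoff a a x <= 1.
Proof.
move=> /andP[x0 xa] a1; rewrite /loan_payoff.
have [a_lt1|a_ge1] := ltP a 1%R.
  rewrite !lte_fin lee_fin wscore_truthful_le1 // andbT.
  by apply: wscore_truthful_gt0; rewrite ?lt_eqF //; apply/andP; split; lra.
have -> : a = 1%R by apply/eqP; rewrite eq_le a1.
by rewrite eqxx lte01 lexx.
Qed.

Lemma loan_payoff_lt a b x : (0 < x)%R -> (x < a <= 1)%R -> (x < b <= 1)%R ->
  a != b -> loan_payoff a b x < loan_payoff a a x.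
Proof.
move=> x0 /andP[xa a1] /andP[xb b1] ab; rewrite /loan_payoff.
have hx : (0 < x < 1)%R by apply/andP; split; lra.
have [b_lt1|b_ge1] := ltP b 1%R.
  have hb : (0 < b < 1)%R by apply/andP; split; lra.
  have [a_lt1|a_ge1] := ltP a 1%R.
    by rewrite lte_fin wscore_lt_truthful // 1?eq_sym //; apply/andP; split; lra.
  have -> : a = 1%R by apply/eqP; rewrite eq_le a1.
  by rewrite eqxx lte_fin wscore_certain_lt1.
have a_lt1 : (a < 1)%R.
  by rewrite lt_neqAle a1 andbT; apply: contra ab => /eqP->; apply/eqP; lra.
by rewrite (lt_eqF a_lt1) a_lt1 ltNyr.
Qed.

Lemma loan_payoff_below a b x : (0 < x)%R -> (0 <= a <= x)%R -> (x < b <= 1)%R ->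
  loan_payoff a b x < 0.
Proof.
move=> x0 ha /andP[xb b1]; rewrite /loan_payoff.
have [b_lt1|_] := ltP b 1%R.
  rewrite lte_fin; apply: wscore_below_lt0 => //; apply/andP; split => //; lra.
by rewrite lt_eqF ?ltNy0 //; lra.
Qed.

(* Truthful payoffs lie in [0, 1]: this is ex post individual rationality
   borrower by borrower. *)
Lemma payoff_truthful a x : (0 <= a <= 1)%R -> 0 <= payoff a a x <= 1.
Proof.
move=> /andP[_ a1]; rewrite /payoff.
case: ifP => [/and3P[x0 _ xa]|_]; last by rewrite lexx lee01.
have hx : (0 < x < a)%R by rewrite x0 xa.
by have /andP[/ltW -> ->] := loan_payoff_truthful hx a1.
Qed.

Lemma payoff_le a b x : (0 <= a <= 1)%R -> (0 <= b <= 1)%R ->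
  payoff a b x <= payoff a a x.
Proof.
move=> ha hb; have /andP[truth_ge0 _] := payoff_truthful x ha.
rewrite {1}/payoff; case: ifP => [/and3P[x0 x1 xb]|_] //.
move: ha hb => /andP[a0 a1] /andP[b0 b1].
rewrite /payoff x0 x1 /=; have [xa|ax] := ltP x a.
  have [<-|ab] := eqVneq a b; first exact: lexx.
  by apply/ltW/loan_payoff_lt => //; rewrite ?xa ?xb.
by apply/ltW/loan_payoff_below => //; rewrite ?a0 ?xb.
Qed.

Lemma payoff_lt a b x : (0 <= a <= 1)%R -> (0 <= b <= 1)%R -> a != b ->
  (0 < x < 1)%R -> x != a -> (x < a)%R || (x < b)%R ->
  payoff a b x < payoff a a x.
Proof.
move=> /andP[a0 a1] /andP[b0 b1] ab /andP[x0 x1] xa xab.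
rewrite /payoff x0 x1 /=; have [xb|bx] := ltP x b.
  have [xa'|ax] := ltP x a.
    by apply: loan_payoff_lt => //; rewrite ?xa' ?xb.
  have {}ax : (a < x)%R by rewrite lt_neqAle eq_sym xa.
  by apply: loan_payoff_below => //; [rewrite a0 ltW | rewrite xb].
have xa' : (x < a)%R by move: xab; rewrite (ltNge x b) bx orbF.
have hx : (0 < x < a)%R by rewrite x0 xa'.
by rewrite xa'; have /andP[] := loan_payoff_truthful hx a1.
Qed.

End Payoff.

Section StrictIntegral.
Context d (T : measurableType d) (R : realType).
Variable mu : {measure set T -> \bar R}.
Variable B : set T.
Hypothesis mB : measurable B.
Local Open Scope ereal_scope.

(* Monotonicity of the integral for measurable functions, integrable or not
   (compare positive and negative parts separately). *)
Lemma le_integral_measurable (f g : T -> \bar R) :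
  measurable_fun B f -> measurable_fun B g -> (forall x, B x -> f x <= g x) ->
  \int[mu]_(x in B) f x <= \int[mu]_(x in B) g x.
Proof.
move=> mf mg fg; have fg' : {in B, forall x, f x <= g x}.
  by move=> x; rewrite inE; exact: fg.
rewrite (integralE _ _ f) (integralE _ _ g); apply: leeB.
  apply: ge0_le_integral => //; try exact: measurable_funepos.
  by move=> x Bx; apply: funepos_le fg' _ _; rewrite inE.
apply: ge0_le_integral => //; try exact: measurable_funeneg.
by move=> x Bx; apply: funeneg_le fg' _ _; rewrite inE.
Qed.

Lemma integral_gt0 (h : T -> \bar R) (S : set T) :
  measurable S -> S `<=` B -> 0 < mu S -> measurable_fun B h ->
  (forall x, B x -> 0 <= h x) -> (forall x, S x -> 0 < h x) ->
  0 < \int[mu]_(x in B) h x.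
Proof.
move=> mS SB muS mh h0 hS; rewrite lt_neqAle integral_ge0 // andbT.
apply/negP => /eqP/esym int0.
have [N [mN muN0 hN]] : ae_eq mu B h (cst 0).
  apply/(ae_eq_integral_abs mu mB mh).
  by rewrite -int0; apply: eq_integral => x; rewrite inE => /h0/gee0_abs.
suff : mu S <= mu N by rewrite muN0 leNgt muS.
apply: le_measure; rewrite ?inE // => x Sx; apply: hN => /(_ (SB x Sx)) /= hx0.
by move: (hS x Sx); rewrite hx0 ltxx.
Qed.

Lemma bounded_integrable (h : T -> \bar R) (M : R) : mu B < +oo ->
  measurable_fun B h -> (forall x, B x -> `|h x| <= M%:E) ->
  mu.-integrable B h.
Proof.
move=> muB mh hM; apply/integrableP; split => //.
apply: (@le_lt_trans _ _ (\int[mu]_(x in B) cst `|M|%:E x)).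
  apply: ge0_le_integral => //; first exact: measurableT_comp.
  by move=> x Bx; rewrite (le_trans (hM x Bx)) // lee_fin ler_norm.
by rewrite integral_cst // lte_mul_pinfty.
Qed.

(* Strict monotonicity of the integral: if f <= g <= M on B, with g >= 0,
   and f < g on a subset S of positive measure, then the integral of f is
   strictly smaller; f may be unbounded below (even -oo), which is handled
   by first truncating it at -1. *)
Lemma lt_integral (f g : T -> \bar R) (S : set T) (M : R) :
  mu B < +oo -> measurable S -> S `<=` B -> 0 < mu S ->
  measurable_fun B f -> measurable_fun B g ->
  (forall x, B x -> f x <= g x) -> (forall x, B x -> 0 <= g x <= M%:E) ->
  (forall x, S x -> f x < g x) ->
  \int[mu]_(x in B) f x < \int[mu]_(x in B) g x.
Proof.
move=> muB mS SB muS mf mg fg gM fgS.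
pose F x := maxe (f x) (-1)%:E.
have mF : measurable_fun B F.
  by apply: measurable_maxe => //; exact: measurable_cst.
have F_ge x : (-1)%:E <= F x by rewrite le_max lexx orbT.
have Fg x : B x -> F x <= g x.
  move=> Bx; have /andP[g0 _] := gM x Bx.
  by rewrite ge_max fg //= (le_trans _ g0) // lee_fin lerN10.
have FM x : B x -> F x <= M%:E.
  by move=> Bx; have /andP[_ gM'] := gM x Bx; exact: le_trans (Fg x Bx) gM'.
have F_fin x : B x -> F x \is a fin_num.
  move=> Bx; rewrite fin_numElt (lt_le_trans (ltNyr _) (F_ge x)).
  by rewrite (le_lt_trans (FM x Bx)) ?ltry.
have iF : mu.-integrable B F.
  apply: (@bounded_integrable F (`|M| + 1)) => // x Bx.
  move: (F_fin x Bx) (FM x Bx) (F_ge x); case: (F x) => // r _.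
  rewrite !lee_fin => rM r1; rewrite ler_norml.
  by have := ler_norm M; have := normr_ge0 M; lra.
have ig : mu.-integrable B g.
  apply: (@bounded_integrable g M) => // x Bx.
  by have /andP[g0 gM'] := gM x Bx; rewrite gee0_abs.
apply: (le_lt_trans (le_integral_measurable mf mF _)).
  by move=> x _; rewrite le_max lexx.
rewrite -sube_gt0 -integralB //; apply: (integral_gt0 mS SB muS).
- exact: emeasurable_funB.
- by move=> x Bx; rewrite sube_ge0 ?Fg ?F_fin.
- move=> x Sx; rewrite sube_gt0 gt_max fgS //=.
  have /andP[g0 _] := gM x (SB x Sx).
  by rewrite (lt_le_trans _ g0) // lte_fin ltrN10.
Qed.

End StrictIntegral.

Section Mechanism.
Variable R : realType.
Variables (n m : nat) (c : R) (w : 'I_n -> R) (i : 'I_n).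
Hypothesis wi_gt0 : 0 < w i.

Definition others_sum (P : 'M[R]_(n, m)) (q : 'I_m) : R :=
  \sum_(j < n | j != i) w j * P j q.

Definition critical (s : R) : R := Num.min 1 (Num.max 0 ((c - s) / w i)).

Lemma agg_with_row (r : 'rV[R]_m) P q :
  agg w (with_row i r P) q = w i * r ord0 q + others_sum P q.
Proof.
rewrite /agg (bigD1 i) //= mxE eqxx; congr (_ + _).
by apply: eq_bigr => j ji; rewrite mxE (negbTE ji).
Qed.

Lemma crit_with_row (r : 'rV[R]_m) P q :
  crit c w (with_row i r P) i q = critical (others_sum P q).
Proof.
rewrite /crit /critical /others_sum.
congr (Num.min 1 (Num.max 0 ((c - _) / w i))).
by apply: eq_bigr => j ji; rewrite mxE (negbTE ji).
Qed.

Lemma critical_inside s : 0 < critical s < 1 -> critical s = (c - s) / w i.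
Proof.
rewrite /critical; set y := (c - s) / w i => /andP[h0 h1].
have [y0|y0] := leP y 0; first by move: h0; rewrite (max_l y0) (min_r ler01) ltxx.
rewrite (max_r (ltW y0)) in h1 *.
by have [y1|//] := leP 1 y; move: h1; rewrite (min_l y1) ltxx.
Qed.

Local Open Scope ereal_scope.

Lemma expected_winkler (a b x : R) : (0 <= a <= 1)%R -> (0 < x < 1)%R ->
  (x < b <= 1)%R ->
  a%:E * winkler1 b x + (1 - a)%:E * winkler0 b x = loan_payoff a b x.
Proof.
move=> /andP[a0 a1] hx /andP[xb b1]; have Lx := lnN_gt0 hx.
move: (hx) => /andP[x0 x1]; rewrite /winkler1 /winkler0 hx /eln /loan_payoff.
rewrite (_ : (b <= 0)%R = false); last by apply/negbTE; rewrite -ltNge; lra.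
have [b_lt1|b_ge1] := ltP b 1%R.
  rewrite (_ : (1 - b <= 0)%R = false); last by apply/negbTE; rewrite -ltNge; lra.
  by rewrite -!EFinB -!EFinM -EFinD /wscore /lscore; congr (_%:E); ring.
have -> : b = 1%R by apply/eqP; rewrite eq_le b1 b_ge1.
have Lx0 : (- ln x != 0)%R by rewrite gt_eqF.
rewrite subrr lexx ln1 -EFinB -EFinM sub0r (divff Lx0) mulr1.
rewrite addNye mulNyr gtr0_sg ?invr_gt0 // mul1e.
have [a_lt1|a_ge1] := ltP a 1%R.
  by rewrite lt_eqF // mulrNy gtr0_sg ?subr_gt0 // mul1e addeNy.
have -> : a = 1%R by apply/eqP; rewrite eq_le a1 a_ge1.
by rewrite subrr mul0e adde0 eqxx.
Qed.

Lemma utility_payoff (p r : 'rV[R]_m) P : unitrow p -> unitrow r ->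
  utility c w i p r P =
  \sum_(q < m) payoff (p ord0 q) (r ord0 q) (critical (others_sum P q)).
Proof.
move=> hp hr; rewrite /utility big_mkcond /=; apply: eq_bigr => q _.
rewrite /loan agg_with_row crit_with_row.
set s := others_sum P q; set x := critical s.
have ha := hp q; have /andP[_ b1] := hr q.
have [hx|hx] := boolP ((0 < x) && (x < 1))%R; last first.
  rewrite /winkler1 /winkler0 (negbTE hx) !mule0 adde0 /payoff.
  by rewrite andbA (negbTE hx) /=; case: ifP.
have loanE : (c < w i * r ord0 q + s)%R = (x < r ord0 q)%R.
  by rewrite (critical_inside hx : x = _) ltr_pdivrMr //; apply/idP/idP => h; lra.
rewrite loanE /payoff; move: (hx) => /andP[-> ->] /=.
by case: ifP => // xb; apply: expected_winkler; rewrite ?xb.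
Qed.

End Mechanism.

Lemma continuous_sum (R : realType) (T : topologicalType) (I : Type) (r : seq I)
    (pr : pred I) (F : I -> T -> R) :
  (forall j, continuous (F j)) ->
  continuous (fun x => \sum_(j <- r | pr j) F j x).
Proof.
move=> Fc; rewrite -fct_sumE.
apply: (big_ind (fun f : T -> R => continuous f)) => //.
  exact: cst_continuous.
by move=> f g fc gc x; exact: (continuousD (fc x) (gc x)).
Qed.

Lemma inv_measurable (R : realType) : measurable_fun setT (@GRing.inv R).
Proof.
have -> : [set: R] = [set 0] `|` [set x | x != 0].
  by apply/seteqP; split => x //= _; case: (eqVneq x 0) => h; [left|right].
apply/measurable_funU => //; first by apply: open_measurable; exact: open_neq.
split; first exact: measurable_fun_set1.
apply: open_continuous_measurable_fun; first exact: open_neq.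
by move=> x; rewrite inE => /= x0; exact: inv_continuous.
Qed.

Lemma payoff_measurable (R : realType) (a b : R) :
  measurable_fun setT (payoff a b).
Proof.
rewrite /payoff; apply: measurable_fun_ifT.
- apply: measurable_and; first exact: measurable_fun_ltr.
  by apply: measurable_and; exact: measurable_fun_ltr.
- rewrite /loan_payoff; case: (b < 1); last exact: measurable_cst.
  apply/measurable_EFinP; rewrite /wscore /lscore; apply: measurable_funM.
    apply: measurable_funD; apply: measurable_funM => //.
      by apply: measurable_funB => //; exact: measurable_ln.
    apply: measurable_funB => //.
    apply: measurableT_comp; first exact: measurable_ln.
    exact: measurable_funB.
  apply: measurableT_comp; first exact: inv_measurable.
  by apply: measurable_funN; exact: measurable_ln.
- exact: measurable_cst.
Qed.

Section Profiles.
Variable R : realType.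
Variables (n m : nat).
Local Notation Profiles := (BeliefSpace R n m).

Lemma open_measurable_profiles (U : set 'M[R]_(n, m)) :
  open U -> measurable (U : set Profiles).
Proof. by move=> oU; apply: sub_sigma_algebra. Qed.

Lemma continuous_measurable_profiles (phi : 'M[R]_(n, m) -> R) :
  continuous phi -> measurable_fun setT (phi : Profiles -> R).
Proof.
move=> cphi; apply: (measurability _ (RGenOpens.measurableE R)).
move=> _ [_ [a [b ->] <-]]; rewrite setTI; apply: open_measurable_profiles.
by move/continuousP: cphi; apply; exact: interval_open.
Qed.

Lemma unitbox_measurable : measurable (unitbox R n m : set Profiles).
Proof.
have -> : unitbox R n m = \bigcap_(j in setT) \bigcap_(q in setT)
    (setT `&` (fun P : Profiles => P j q) @^-1` `[0%R, 1%R]).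
  apply/seteqP; split => P /=.
    by move=> h j _ q _; split => //=; rewrite in_itv /=; exact: h.
  by move=> h j q; have := h j I q I => -[_] /=; rewrite in_itv.
apply: fin_bigcap_measurable; first exact: finite_finset.
move=> j _; apply: fin_bigcap_measurable; first exact: finite_finset.
move=> q _; have coord_meas : measurable_fun setT (fun P : Profiles => P j q).
  by apply: continuous_measurable_profiles; exact: coord_continuous.
by apply: coord_meas => //; exact: measurable_itv.
Qed.

Variables (c : R) (w : 'I_n -> R) (i : 'I_n).

Lemma others_sum_continuous q :
  continuous (fun P : 'M[R]_(n, m) => others_sum w i P q).
Proof.
apply: continuous_sum => j P.
by apply: continuousM; [exact: cst_continuous | exact: coord_continuous].
Qed.

Lemma critical_measurable : measurable_fun setT (critical c w i).
Proof.
apply: measurable_minr; first exact: measurable_cst.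
apply: measurable_maxr; first exact: measurable_cst.
by apply: measurable_funM => //; exact: measurable_funB.
Qed.

Local Open Scope ereal_scope.

Lemma utility_measurable (p r : 'rV[R]_m) :
  (0 < w i)%R -> unitrow p -> unitrow r ->
  measurable_fun setT (fun P : Profiles => utility c w i p r P).
Proof.
move=> wi0 hp hr; rewrite (funext (fun P => utility_payoff c wi0 P hp hr)).
apply: emeasurable_sum => q.
apply: measurableT_comp; first exact: payoff_measurable.
apply: measurableT_comp; first exact: critical_measurable.
by apply: continuous_measurable_profiles; exact: others_sum_continuous.
Qed.

End Profiles.

Lemma deviation_window (R : realType) (a b u : R) :
  0 <= a -> 0 <= b -> a != b -> 0 < u ->
  exists2 t, 0 < t <= u &
    forall x, 0 < x < t -> (x != a) && ((x < a) || (x < b)).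
Proof.
move=> a0 b0 ab u0.
have [v v0 sep] : exists2 v, 0 < v &
    forall x, 0 < x < v -> (x != a) && ((x < a) || (x < b)).
  have [a_pos|a_le0] := ltP 0 a.
    by exists a => // x /andP[_ xa]; rewrite xa lt_eqF.
  have a_eq0 : a = 0 by apply/eqP; rewrite eq_le a_le0.
  have b_pos : 0 < b.
    rewrite lt_neqAle b0 andbT.
    by apply: contra ab => /eqP b_eq0; rewrite a_eq0 b_eq0.
  by exists b => // x /andP[x0 xb]; rewrite xb orbT a_eq0 gt_eqF.
exists (Num.min u v); first by rewrite lt_min u0 v0 ge_min lexx.
by move=> x /andP[x0]; rewrite lt_min => /andP[_ xv]; apply: sep; rewrite x0.
Qed.

Lemma row_neq (R : realType) (m : nat) (p r : 'rV[R]_m) :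
  r != p -> exists q, r ord0 q != p ord0 q.
Proof.
move=> rp; apply/existsP; apply: contraNT rp => /existsPn req.
by apply/eqP/matrixP => a q; rewrite (ord1 a); apply/eqP; rewrite -[_ == _]negbK.
Qed.

Section Incentives.
Variable R : realType.
Variables (n m : nat) (c : R) (w : 'I_n -> R) (i : 'I_n).
Hypothesis wi_gt0 : 0 < w i.

(* Profiles of the others for which the critical report of i on borrower q
   falls in (0, t): their weighted reports sum to a value in (c - w_i t, c). *)
Definition pivotal (t : R) (q : 'I_m) : set 'M[R]_(n, m) :=
  (fun P => others_sum w i P q) @^-1` `](c - w i * t), c[.

Lemma pivotal_open t q : open (pivotal t q).
Proof.
move: (@others_sum_continuous R n m w i q) => /continuousP; apply.
exact: interval_open.
Qed.

Lemma pivotal_critical t q P : t <= 1 -> pivotal t q P ->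
  0 < critical c w i (others_sum w i P q) < t.
Proof.
move=> t1; rewrite /pivotal /= in_itv /=; set s := others_sum w i P q.
move=> /andP[lo hi]; set y := (c - s) / w i.
have y0 : 0 < y by rewrite divr_gt0 // subr_gt0.
have yt : y < t by rewrite ltr_pdivrMr // [t * _]mulrC; lra.
have y1 : y <= 1 by rewrite ltW // (lt_le_trans yt).
by rewrite /critical -/y max_r ?ltW // min_r // y0 yt.
Qed.

(* When no single weight reaches 1 - c, every pivotal set meets the box:
   a constant profile of the others puts their sum in the middle. *)
Lemma pivotal_meets_box t q : \sum_(j < n) w j = 1 -> w i < 1 - c ->
  0 < t -> w i * t <= c -> (pivotal t q `&` unitbox R n m) !=set0.
Proof.
move=> sw wi_lt t0 wtc.
have others_w : \sum_(j < n | j != i) w j = 1 - w i.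
  by move: sw; rewrite (bigD1 i) //= => sw; lra.
have wt0 : 0 < w i * t by rewrite mulr_gt0.
pose v := (c - w i * t / 2) / (1 - w i).
have v0 : 0 <= v by rewrite divr_ge0 //; lra.
have v1 : v <= 1 by rewrite ler_pdivrMr ?mul1r; lra.
exists (const_mx v); split; last by move=> j k; rewrite mxE v0 v1.
have sum_v : others_sum w i (const_mx v) q = c - w i * t / 2.
  rewrite /others_sum; under eq_bigr do rewrite mxE.
  by rewrite -big_distrl /= others_w /v mulrC divfK // subr_eq0 gt_eqF //; lra.
by rewrite /pivotal /= sum_v in_itv /=; apply/andP; split; lra.
Qed.

Local Open Scope ereal_scope.

Lemma utility_truthful_bounds (p : 'rV[R]_m) P : unitrow p ->
  0 <= utility c w i p p P <= m%:R%:E.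
Proof.
move=> hp; rewrite (utility_payoff c wi_gt0 P hp hp); apply/andP; split.
  by apply: sume_ge0 => q _; have /andP[] := payoff_truthful
    (critical c w i (others_sum w i P q)) (hp q).
apply: (@le_trans _ _ (\sum_(q < m) 1%R%:E)); last first.
  by rewrite sumEFin sumr_const card_ord.
by apply: lee_sum => q _; have /andP[] := payoff_truthful
  (critical c w i (others_sum w i P q)) (hp q).
Qed.

Lemma utility_le (p r : 'rV[R]_m) P : unitrow p -> unitrow r ->
  utility c w i p r P <= utility c w i p p P.
Proof.
move=> hp hr; rewrite !(utility_payoff c wi_gt0 P hp) //.
by apply: lee_sum => q _; apply: payoff_le; [exact: hp | exact: hr].
Qed.

Lemma utility_lt (p r : 'rV[R]_m) P q : unitrow p -> unitrow r ->
  r ord0 q != p ord0 q ->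
  let x := critical c w i (others_sum w i P q) in
  (0 < x < 1)%R -> (x != p ord0 q) && ((x < p ord0 q) || (x < r ord0 q))%R ->
  utility c w i p r P < utility c w i p p P.
Proof.
move=> hp hr rp x hx /andP[xp xpr]; rewrite !(utility_payoff c wi_gt0 P hp) //.
rewrite (bigD1 q) //= [X in _ < X](bigD1 q) //=.
set dev := \sum_(k < m | k != q) _; set truth := \sum_(k < m | k != q) _.
have dev_le : dev <= truth.
  by apply: lee_sum => k _; apply: payoff_le; [exact: hp | exact: hr].
have truth_fin : truth \is a fin_num.
  apply/sum_fin_numP => k _ _.
  have /andP[t0 t1] :=
    payoff_truthful (critical c w i (others_sum w i P k)) (hp k).
  by rewrite fin_numElt (lt_le_trans _ t0) ?ltNyr // (le_lt_trans t1) ?ltry.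
apply: (le_lt_trans (leeD2l _ dev_le)); apply: lte_leD => //.
by apply: payoff_lt; [exact: hp | exact: hr | rewrite eq_sym | exact: hx
  | exact: xp | exact: xpr].
Qed.

End Incentives.

Lemma winkler_ex_post_IR (R : realType) (n m : nat) (c : R) (w : 'I_n -> R) :
  (forall i, 0 < w i) -> ex_post_IR n m c w.
Proof.
move=> w_gt0 i p P hp _.
by have /andP[] := utility_truthful_bounds c (w_gt0 i) P hp.
Qed.

Lemma winkler_strictly_interim_IC (R : realType) (n m : nat) (c : R)
    (w : 'I_n -> R) (D : probability (BeliefSpace R n m) R) :
  full_support D -> 0 < c -> (forall i, 0 < w i) -> \sum_(i < n) w i = 1 ->
  (forall i, w i < 1 - c) -> strictly_interim_IC D c w.
Proof.
move=> fsD c_gt0 w_gt0 sw wc i p r hp hr rp.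
have wi0 := w_gt0 i; have [q rpq] := row_neq rp.
pose u := Num.min 1 (c / w i).
have u_gt0 : 0 < u by rewrite lt_min ltr01 divr_gt0.
have /andP[a0 _] := hp q; have /andP[b0 _] := hr q.
have pr : p ord0 q != r ord0 q by rewrite eq_sym.
have [t /andP[t_gt0 tu] window] := deviation_window a0 b0 pr u_gt0.
have t1 : t <= 1 by rewrite (le_trans tu) // ge_min lexx.
have wtc : w i * t <= c.
  have tc : t <= c / w i by rewrite (le_trans tu) // ge_min lexx orbT.
  by rewrite mulrC -ler_pdivlMr.
pose S := pivotal c w i t q `&` unitbox R n m.
have mS : measurable (S : set (BeliefSpace R n m)).
  apply: measurableI; last exact: unitbox_measurable.
  by apply: open_measurable_profiles; exact: pivotal_open.
rewrite /interim_utility; apply: (@lt_integral _ _ _ D _ _ _ _ S m%:R) => //.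
- exact: unitbox_measurable.
- by rewrite (le_lt_trans (probability_le1 D (@unitbox_measurable R n m))) ?ltry.
- by move=> P [].
- by apply: fsD; [exact: pivotal_open | exact: pivotal_meets_box].
- by apply: measurable_funTS; exact: utility_measurable.
- by apply: measurable_funTS; exact: utility_measurable.
- by move=> P _; exact: utility_le.
- by move=> P _; exact: utility_truthful_bounds.
move=> P [/(pivotal_critical wi0 t1) /andP[x0 xt] _].
apply: (utility_lt wi0 hp hr rpq); first by rewrite x0 (lt_le_trans xt).
by apply: window; rewrite x0 xt.
Qed.

(* Averaging w_i < 1 - c over the n recommenders, whose weights sum to 1,
   gives 1/n < 1 - c. *)
Lemma threshold_lt_of_small_weights (R : realType) (n : nat) (c : R)
    (w : 'I_n -> R) :
  \sum_(i < n) w i = 1 -> (forall i, w i < 1 - c) -> c < (n%:R - 1) / n%:R.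
Proof.
case: n w => [|k] w sw wc.
  by move: sw; rewrite big_ord0 => /eqP; rewrite eq_sym oner_eq0.
have : \sum_(i < k.+1) w i < \sum_(i < k.+1) (1 - c).
  by apply: ltr_sum => //; apply/hasP; exists ord0 => //; rewrite mem_index_enum.
rewrite sw sumr_const card_ord -mulr_natr => avg.
by rewrite ltr_pdivlMr ?ltr0n //; nra.
Qed.

Unset Implicit Arguments.

Theorem corollary1 (R : realType) (n m : nat) (c : R) (w : 'I_n -> R) :
  0 <= c <= 1 ->
  (forall i, 0 < w i) -> \sum_(i < n) w i = 1 ->
  (* part 1: IR and strict interim IC *)
  (forall D : probability (BeliefSpace R n m) R,
     D (unitbox R n m) = 1%E -> full_support D ->
     0 < c ->
     (forall i, w i < 1 - c) ->
     ex_post_IR n m c w /\ strictly_interim_IC D c w) /\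
  (* part 2: max_i w_i < 1 - c only if c < (n-1)/n *)
  ((forall i, w i < 1 - c) -> c < (n%:R - 1) / n%:R).
Proof.
move=> _ w_gt0 sw; split; last exact: threshold_lt_of_small_weights.
move=> D _ fsD c_gt0 wc; split; first exact: winkler_ex_post_IR.
exact: winkler_strictly_interim_IC.
Qed.
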